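(* Let $(S,V)$ be a complete semiring-semimodule pair, let $S'\subseteq S$ contain $0$ and $1$, let $n\ge1$, let $\Gamma$ be an alphabet, and let $M\in (S'^{n\times n})^{\Gamma^*\times\Gamma^*}$ be a pushdown transition matrix. Then for all $0\le l\le n$, the family $(z_p)_{p\in\Gamma}$ with $z_p=(M^{\omega,l})_p\in V^n$ is a solution of the linear system $$z_p=\sum_{p'\in\Gamma}(A_M)_{p,p'}\,z_{p'},\qquad p\in\Gamma.$$
   Context: A complete semiring-semimodule pair $(S,V)$ (in the sense of Ésik and Kuich, ''Modern Automata Theory'') consists of a complete starsemiring $S$ (arbitrary sums with infinite associativity/commutativity/distributivity laws, star $s^*=\sum_{j\ge0}s^j$) and a complete $S$-semimodule $V$, with infinite products $\prod_{j\ge1}s_j\in V$ of sequences in $S$ satisfying the axioms of that framework. $M\in (S'^{n\times n})^{\Gamma^*\times\Gamma^*}$ is a $\Gamma^*\times\Gamma^*$ matrix with $n\times n$ blocks over $S'$; it is a pushdown transition matrix if (i) for each $p\in\Gamma$ only finitely many blocks $M_{p,\pi}$ are nonzero, and (ii) $M_{\pi_1,\pi_2}=M_{p,\pi}$ if $\pi_1=p\pi'$, $\pi_2=\pi\pi'$ for some $p\in\Gamma$, $\pi,\pi'\in\Gamma^*$, and $0$ otherwise. $M^*=\sum_{m\ge0}M^m$ with blocks $(M^* )_{\pi,\pi'}$. Let $P_l=\{(j_1,j_2,\dots)\in\{1,\dots,n\}^\omega\mid j_t\le l\text{ for infinitely many }t\}$; $M^{\omega,l}\in (V^n)^{\Gamma^*}$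 is given by $((M^{\omega,l})_\pi)_i=\sum_{\pi_1,\pi_2,\ldots\in\Gamma^*}\sum_{(j_1,j_2,\ldots)\in P_l}(M_{\pi,\pi_1})_{i,j_1}(M_{\pi_1,\pi_2})_{j_1,j_2}\cdots$ (sum of weights of infinite paths from $(\pi,i)$ in the graph on $\Gamma^*\times\{1,\dots,n\}$ with adjacency matrix $M$ that visit states $\le l$ infinitely often). For $p,p'\in\Gamma$, $$(A_M)_{p,p'}=\sum_{\substack{\pi=p_1\dots p_k\in\Gamma^+,\ 1\le j\le k\\ p_j=p'}}M_{p,\pi}\,(M^* )_{p_1,\epsilon}\cdots(M^* )_{p_{j-1},\epsilon}\in S^{n\times n}.$$ *)

From mathcomp Require Import all_boot.
Set Implicit Arguments. Unset Strict Implicit. Unset Printing Implicit Defensive.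

(* Complete semirings (Esik--Kuich).  Index sets are types; a sum over *)
(* an index set I is  cs_sum I a.  The set-theoretic axioms (empty,    *)
(* singleton, two-element sums; infinite associativity over           *)
(* partitions) are rendered as: empty-type sums, unit sums, bool sums, *)
(* invariance under bijective reindexing, and sigma-type splitting.   *)
Record csemiring := CSemiring {
  cs_car :> Type;
  cs_add : cs_car -> cs_car -> cs_car;
  cs_mul : cs_car -> cs_car -> cs_car;
  cs_zero : cs_car;
  cs_one : cs_car;
  cs_addA : associative cs_add;
  cs_addC : commutative cs_add;
  cs_add0l : left_id cs_zero cs_add;
  cs_mulA : associative cs_mul;
  cs_mul1l : left_id cs_one cs_mul;
  cs_mul1r : right_id cs_one cs_mul;
  cs_mulDl : left_distributive cs_mul cs_add;
  cs_mulDr : right_distributive cs_mul cs_add;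
  cs_mul0l : left_zero cs_zero cs_mul;
  cs_mul0r : right_zero cs_zero cs_mul;
  cs_sum : forall I : Type, (I -> cs_car) -> cs_car;
  cs_sum_empty : forall (I : Type) (a : I -> cs_car), (I -> False) -> cs_sum a = cs_zero;
  cs_sum_unit : forall a : unit -> cs_car, cs_sum a = a tt;
  cs_sum_bool : forall a : bool -> cs_car, cs_sum a = cs_add (a true) (a false);
  cs_sum_bij : forall (I J : Type) (f : J -> I) (a : I -> cs_car),
      bijective f -> cs_sum (fun j => a (f j)) = cs_sum a;
  cs_sum_sigma : forall (J : Type) (K : J -> Type) (a : {j : J & K j} -> cs_car),
      cs_sum a = cs_sum (fun j => cs_sum (fun k : K j => a (existT _ j k)));
  cs_sum_mul : forall (I1 I2 : Type) (a : I1 -> cs_car) (b : I2 -> cs_car),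
      cs_mul (cs_sum a) (cs_sum b) = cs_sum (fun x : I1 * I2 => cs_mul (a x.1) (b x.2))
}.
Arguments cs_sum {c} I _.

Definition cs_lprod (S : csemiring) (l : seq S) : S := foldr (@cs_mul S) (@cs_one S) l.

Record cpair (S : csemiring) := CPair {
  cp_car :> Type;
  cp_add : cp_car -> cp_car -> cp_car;
  cp_zero : cp_car;
  cp_addA : associative cp_add;
  cp_addC : commutative cp_add;
  cp_add0l : left_id cp_zero cp_add;
  cp_act : S -> cp_car -> cp_car;
  cp_actDl : forall (s1 s2 : S) v, cp_act (cs_add s1 s2) v = cp_add (cp_act s1 v) (cp_act s2 v);
  cp_actDr : forall (s : S) v1 v2, cp_act s (cp_add v1 v2) = cp_add (cp_act s v1) (cp_act s v2);
  cp_actA : forall (s1 s2 : S) v, cp_act (cs_mul s1 s2) v = cp_act s1 (cp_act s2 v);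
  cp_act1 : forall v, cp_act (cs_one S) v = v;
  cp_act0l : forall v, cp_act (cs_zero S) v = cp_zero;
  cp_act0r : forall s, cp_act s cp_zero = cp_zero;
  cp_sum : forall I : Type, (I -> cp_car) -> cp_car;
  cp_sum_empty : forall (I : Type) (a : I -> cp_car), (I -> False) -> cp_sum a = cp_zero;
  cp_sum_unit : forall a : unit -> cp_car, cp_sum a = a tt;
  cp_sum_bool : forall a : bool -> cp_car, cp_sum a = cp_add (a true) (a false);
  cp_sum_bij : forall (I J : Type) (f : J -> I) (a : I -> cp_car),
      bijective f -> cp_sum (fun j => a (f j)) = cp_sum a;
  cp_sum_sigma : forall (J : Type) (K : J -> Type) (a : {j : J & K j} -> cp_car),
      cp_sum a = cp_sum (fun j => cp_sum (fun k : K j => a (existT _ j k)));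
  cp_sum_actl : forall (s : S) (I : Type) (v : I -> cp_car),
      cp_act s (cp_sum v) = cp_sum (fun i => cp_act s (v i));
  cp_sum_actr : forall (I : Type) (a : I -> S) (v : cp_car),
      cp_act (cs_sum I a) v = cp_sum (fun i => cp_act (a i) v);
  (* infinite product  prod_{j>=1} s_j ; here indexed from 0 *)
  cp_iprod : (nat -> S) -> cp_car;
  cp_iprod_shift : forall s : nat -> S, cp_iprod s = cp_act (s 0) (cp_iprod (fun j => s j.+1));
  cp_iprod_group : forall (s : nat -> S) (N : nat -> nat),
      N 0 = 0 -> (forall j, N j < N j.+1) ->
      cp_iprod s = cp_iprod (fun j => cs_lprod (map s (iota (N j) (N j.+1 - N j))));
  cp_iprod_sum : forall (I : nat -> Type) (a : forall j, I j -> S),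
      cp_iprod (fun j => cs_sum (I j) (a j))
      = cp_sum (fun f : (forall j, I j) => cp_iprod (fun j => a j (f j)))
}.
Arguments cp_sum {S c} I _.
Arguments cp_act {S c} _ _.
Arguments cp_iprod {S c} _.

Section PushdownDefs.
Variables (S : csemiring) (V : cpair S) (Gamma : finType) (n : nat).

Definition bmx := 'I_n -> 'I_n -> S.

Definition fsumS (T : finType) (F : T -> S) : S :=
  foldr (fun x acc => cs_add (F x) acc) (cs_zero S) (enum T).
Definition fsumV (T : finType) (F : T -> V) : V :=
  foldr (fun x acc => cp_add (F x) acc) (cp_zero V) (enum T).

Definition bmx_zero : bmx := fun _ _ => cs_zero S.
Definition bmx_one : bmx := fun i j => if i == j then cs_one S else cs_zero S.
Definition bmx_mul (A B : bmx) : bmx := fun i j => fsumS (fun k => cs_mul (A i k) (B k j)).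
Definition bmx_lprod (l : seq bmx) : bmx := foldr bmx_mul bmx_one l.

Definition gmx := seq Gamma -> seq Gamma -> bmx.

Definition is_pushdown_transition_matrix (M : gmx) : Prop :=
  (forall p : Gamma, exists L : seq (seq Gamma),
      forall pi, (exists i j, M [:: p] pi i j <> cs_zero S) -> pi \in L) /\
  (forall (p : Gamma) (pi pi' : seq Gamma), M (p :: pi') (pi ++ pi') = M [:: p] pi) /\
  (forall pi1 pi2, ~ (exists (p : Gamma) (pi pi' : seq Gamma), pi1 = p :: pi' /\ pi2 = pi ++ pi') ->
      M pi1 pi2 = bmx_zero).

Fixpoint gmx_pow (M : gmx) (m : nat) : gmx :=
  match m with
  | 0 => fun pi1 pi2 => if pi1 == pi2 then bmx_one else bmx_zero
  | m'.+1 => fun pi1 pi2 i j =>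
      cs_sum (seq Gamma) (fun pi => bmx_mul (gmx_pow M m' pi1 pi) (M pi pi2) i j)
  end.

Definition gmx_star (M : gmx) : gmx :=
  fun pi1 pi2 i j => cs_sum nat (fun m => gmx_pow M m pi1 pi2 i j).

(* (A_M)_{p,p'} : sum over pi = p_1...p_k in Gamma^+ and positions t (0-based,
   t < k) with p_(t+1) = p', of M_{p,pi} (Mstar)_{p_1,eps} ... (Mstar)_{p_t,eps} *)
Definition A_M (M : gmx) (p p' : Gamma) : bmx :=
  fun i j =>
    cs_sum {x : seq Gamma * nat | (x.2 < size x.1) && (nth p' x.1 x.2 == p')}
      (fun x => bmx_mul (M [:: p] (val x).1)
                  (bmx_lprod (map (fun q => gmx_star M [:: q] [::]) (take (val x).2 (val x).1)))
                  i j).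

(* P_l, with states 1..n encoded as ordinals 0..n-1: state j <= l iff ordinal < l *)
Definition P_l (l : nat) (js : nat -> 'I_n) : Prop :=
  forall N : nat, exists t, N <= t /\ (js t < l)%N.

(* ((M^{omega,l})_pi)_i : sum over pi_1, pi_2, ... and (j_1, j_2, ...) in P_l of
   (M_{pi,pi_1})_{i,j_1} (M_{pi_1,pi_2})_{j_1,j_2} ... ;
   pis t = pi_(t+1), js t = j_(t+1). *)
Definition M_omega (M : gmx) (l : nat) (pi : seq Gamma) (i : 'I_n) : V :=
  cp_sum (nat -> seq Gamma) (fun pis =>
    cp_sum {js : nat -> 'I_n | P_l l js} (fun js =>
      let pth := fun t => if t is t'.+1 then pis t' else pi in
      let st := fun t => if t is t'.+1 then proj1_sig js t' else i in
      cp_iprod (fun t => M (pth t) (pth t.+1) (st t) (st t.+1)))).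

End PushdownDefs.

Arguments M_omega {S} V {Gamma n} M l pi i.
Arguments fsumV {S} V {T} F.

From mathcomp Require Import all_boot zify.
From Stdlib Require Import ClassicalEpsilon FunctionalExtensionality ProofIrrelevance Classical.
Set Implicit Arguments. Unset Strict Implicit. Unset Printing Implicit Defensive.

(** An accepting run from a stack [y ++ s] with [y] nonempty either never
    touches the bottom [s], and is then a run from [y] with [s] appended to
    every stack, or first reaches the stack [s] after a finite path from [y]
    to the empty stack; these paths add up to [Mstar_{y,eps}].  Hence
      [omega (q :: s) = sum_k Mstar_{q,eps} omega (s, k) + omega [:: q]],
    and by induction on the stack
      [omega (p_1 ... p_m) = sum_j Mstar_{p_1,eps} ... Mstar_{p_(j-1),eps} omega [:: p_j]].
    Substituting this into the one-step unfolding
    [omega [:: p] = sum_pi M_{p,pi} omega pi] gives the system with matrix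
    [A_M].  Finite prefixes do not affect the acceptance condition [P_l], so
    the proof works for every [l]. *)

Lemma mkseqSl (T : Type) (f : nat -> T) m : mkseq f m.+1 = f 0 :: mkseq (fun t => f t.+1) m.
Proof. by rewrite /mkseq /= -[1]/(1 + 0) iotaDl -map_comp. Qed.

Lemma catIs (T : eqType) (a b s : seq T) : a ++ s = b ++ s -> a = b.
Proof.
move=> e; have ab : size a = size b by have := congr1 size e; rewrite !size_cat => /addIn.
by rewrite -(take_size_cat s ab) e take_size_cat.
Qed.

Lemma cat_neq (T : eqType) (s a : seq T) : a != [::] -> a ++ s != s.
Proof.
by apply: contra => /eqP /(congr1 size); rewrite size_cat -{2}[size s]add0n => /addIn /size0nil ->.
Qed.

(** The additive structure shared by [S] and [V], so that the sum calculus
    below is developed once for both. *)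
Record ccmon := CCMon {
  cm_car :> Type;
  cm_add : cm_car -> cm_car -> cm_car;
  cm_zero : cm_car;
  cm_sum : forall I : Type, (I -> cm_car) -> cm_car;
  cm_addC : commutative cm_add;
  cm_add0l : left_id cm_zero cm_add;
  cm_sum_empty : forall (I : Type) (a : I -> cm_car), (I -> False) -> cm_sum a = cm_zero;
  cm_sum_unit : forall a : unit -> cm_car, cm_sum a = a tt;
  cm_sum_bool : forall a : bool -> cm_car, cm_sum a = cm_add (a true) (a false);
  cm_sum_bij : forall (I J : Type) (f : J -> I) (a : I -> cm_car),
      bijective f -> cm_sum (fun j => a (f j)) = cm_sum a;
  cm_sum_sigma : forall (J : Type) (K : J -> Type) (a : {j : J & K j} -> cm_car),
      cm_sum a = cm_sum (fun j => cm_sum (fun k : K j => a (existT _ j k)));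
  cm_sum0 : forall I : Type, cm_sum (fun _ : I => cm_zero) = cm_zero
}.
Arguments cm_sum {c I} _.
Arguments cm_zero {c}.
Arguments cm_add {c}.

Section CompleteSums.
Variable C : ccmon.

Lemma cm_addr0 (x : C) : cm_add x cm_zero = x.
Proof. by rewrite cm_addC cm_add0l. Qed.

Lemma eq_sum I (f g : I -> C) : (forall i, f i = g i) -> cm_sum f = cm_sum g.
Proof. by move=> /functional_extensionality ->. Qed.

Lemma sum_eq0 I (f : I -> C) : (forall i, f i = cm_zero) -> cm_sum f = cm_zero.
Proof. by move=> /eq_sum ->; rewrite cm_sum0. Qed.

Lemma sum_sigmaE J (K : J -> Type) (F : forall j, K j -> C) :
  cm_sum (fun j => cm_sum (F j)) = cm_sum (fun z : {j & K j} => F (projT1 z) (projT2 z)).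
Proof. by rewrite (cm_sum_sigma (fun z : {j & K j} => F (projT1 z) (projT2 z))). Qed.

Lemma sum_sumType A B (f : A + B -> C) :
  cm_sum f = cm_add (cm_sum (fun a => f (inl a))) (cm_sum (fun b => f (inr b))).
Proof.
pose T (b : bool) := if b then A else B.
pose g (z : {b : bool & T b}) : A + B :=
  (if projT1 z as b return T b -> A + B then inl else inr) (projT2 z).
have g_bij : bijective g.
  exists (fun s => match s with inl a => existT T true a | inr b => existT T false b end).
    by case=> -[].
  by case.
by rewrite -(cm_sum_bij f g_bij) cm_sum_sigma cm_sum_bool.
Qed.

Lemma sum_split_pred I (P : I -> Prop) (f : I -> C) :
  cm_sum f = cm_add (cm_sum (fun x : {i | P i} => f (sval x)))
                    (cm_sum (fun x : {i | ~ P i} => f (sval x))).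
Proof.
pose g (s : {i | P i} + {i | ~ P i}) := match s with inl x | inr x => sval x end.
have g_bij : bijective g.
  exists (fun i => match excluded_middle_informative (P i) with
                   | left Pi => inl (exist _ i Pi) | right nPi => inr (exist _ i nPi) end).
    by case=> -[i Pi] /=; case: excluded_middle_informative => // Pi';
      rewrite (proof_irrelevance _ Pi' Pi).
  by move=> i; case: excluded_middle_informative.
by rewrite -(cm_sum_bij f g_bij) sum_sumType.
Qed.

Lemma sum_reindex I J (f : I -> C) (g : J -> C) (Q : J -> Prop) (phi : J -> I) :
  (forall j1 j2, Q j1 -> Q j2 -> phi j1 = phi j2 -> j1 = j2) ->
  (forall j, ~ Q j -> g j = cm_zero) ->
  (forall i, (forall j, Q j -> phi j <> i) -> f i = cm_zero) ->
  (forall j, Q j -> f (phi j) = g j) ->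
  cm_sum f = cm_sum g.
Proof.
move=> phi_inj g0 f0 fg.
pose R i := exists j, Q j /\ phi j = i.
rewrite (sum_split_pred Q g) (sum_eq0 (f := fun x : {j | ~ Q j} => g (sval x))); last first.
  by case=> j /= nQj; apply: g0.
rewrite (sum_split_pred R f) (sum_eq0 (f := fun x : {i | ~ R i} => f (sval x))); last first.
  by case=> i /= nRi; apply: f0 => j Qj e; apply: nRi; exists j.
rewrite !cm_addr0.
pose psi (j : {j | Q j}) : {i | R i} :=
  exist R (phi (sval j)) (ex_intro _ (sval j) (conj (proj2_sig j) erefl)).
have psi_bij : bijective psi.
  exists (fun i => let c := constructive_indefinite_description _ (proj2_sig i) in
                   exist Q (sval c) (proj1 (proj2_sig c))).
    case=> j Qj /=; case: constructive_indefinite_description => j' [Qj' e] /=.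
    have ej := phi_inj _ _ Qj' Qj e; subst j'; congr exist; exact: proof_irrelevance.
  case=> i Ri /=; case: constructive_indefinite_description => j [Qj e] /=.
  subst i; congr exist; exact: proof_irrelevance.
rewrite -(cm_sum_bij (fun x : {i | R i} => f (sval x)) psi_bij).
by apply: eq_sum => -[j Qj]; apply: fg.
Qed.

Lemma sum_pred1 I (f : I -> C) i0 : (forall i, i <> i0 -> f i = cm_zero) -> cm_sum f = f i0.
Proof.
move=> f0; rewrite -(cm_sum_unit (fun _ => f i0)).
apply: (sum_reindex (Q := fun _ => True) (phi := fun _ => i0)) => //.
- by move=> [] [].
- by move=> i ni; apply: f0 => e; apply: (ni tt).
Qed.

Lemma exchange_sum I J (F : I -> J -> C) :
  cm_sum (fun i => cm_sum (fun j => F i j)) = cm_sum (fun j => cm_sum (fun i => F i j)).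
Proof.
rewrite (sum_sigmaE (fun i j => F i j)) (sum_sigmaE (fun j i => F i j)).
pose sw (z : {j : J & I}) := existT (fun _ : I => J) (projT2 z) (projT1 z).
have sw_bij : bijective sw.
  by exists (fun z : {i : I & J} => existT (fun _ => I) (projT2 z) (projT1 z)) => -[].
by rewrite -(cm_sum_bij _ sw_bij).
Qed.

Lemma foldr_sum_seq (T : eqType) (s : seq T) (F : T -> C) : uniq s ->
  foldr (fun x acc => cm_add (F x) acc) cm_zero s = cm_sum (fun x : {x | x \in s} => F (sval x)).
Proof.
elim: s => [_|a s IHs /andP [a_notin_s s_uniq]] /=; first by rewrite cm_sum_empty // => -[].
rewrite IHs // -[F a](cm_sum_unit (fun _ => F a)) -(sum_sumType
  (fun j : unit + {x | x \in s} => if j is inr y then F (sval y) else F a)).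
symmetry; apply: (sum_reindex (Q := fun _ => True) (phi := fun j =>
  if j is inr y then exist (fun x => x \in a :: s) (sval y) (mem_behead (s := a :: s) (proj2_sig y))
  else exist (fun x => x \in a :: s) a (mem_head a s))) => //.
- case=> [[]|[y ys]] [[]|[y' ys']] _ _ /(congr1 sval) //= eq_y.
  + by move: a_notin_s; rewrite eq_y ys'.
  + by move: a_notin_s; rewrite -eq_y ys.
  + by subst y'; congr inr; apply: subset_eq_compat.
- case=> x x_in not_im; case: (eqVneq x a) => [eq_x|neq_x].
    by subst x; case: (not_im (inl tt)) => //; apply: subset_eq_compat.
  have x_in_s : x \in s by move: (x_in); rewrite in_cons (negbTE neq_x).
  by case: (not_im (inr (exist _ x x_in_s))) => //; apply: subset_eq_compat.
- by case.
Qed.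

Lemma foldr_sum_enum (T : finType) (F : T -> C) :
  foldr (fun x acc => cm_add (F x) acc) cm_zero (enum T) = cm_sum F.
Proof.
rewrite foldr_sum_seq ?enum_uniq //.
have val_bij : bijective (fun x : {x | x \in enum T} => sval x).
  exists (fun x => exist _ x (mem_enum T x)) => // -[x xT] /=.
  by congr exist; exact: bool_irrelevance.
exact: (cm_sum_bij F val_bij).
Qed.

Lemma sum_pair A B (F : A * B -> C) :
  cm_sum F = cm_sum (fun a => cm_sum (fun b => F (a, b))).
Proof.
rewrite (sum_sigmaE (fun a b => F (a, b))).
have pair_bij : bijective (fun z : {a : A & B} => (projT1 z, projT2 z)).
  by exists (fun x : A * B => existT (fun _ => B) x.1 x.2) => [[]|[]].
by rewrite -(cm_sum_bij F pair_bij).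
Qed.

Lemma sum_size_rcons (T : Type) m (F : seq T -> C) :
  cm_sum (fun w : {w : seq T | size w == m.+1} => F (sval w))
  = cm_sum (fun x : T => cm_sum (fun w : {w : seq T | size w == m} => F (rcons (sval w) x))).
Proof.
have size_rcons_m (z : {x : T & {w : seq T | size w == m}}) :
    size (rcons (sval (projT2 z)) (projT1 z)) == m.+1.
  by case: z => x [w /= /eqP <-]; rewrite size_rcons.
rewrite (sum_sigmaE (fun x (w : {w | size w == m}) => F (rcons (sval w) x))).
apply: (sum_reindex (Q := fun _ => True)
  (phi := fun z => exist (fun w : seq T => size w == m.+1) _ (size_rcons_m z))) => //.
- case=> x [w w_m] [x' [w' w'_m]] _ _ /(congr1 sval) /= /rcons_inj [eq_w <-].
  by subst w'; congr existT; apply: subset_eq_compat.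
- case=> w; case/lastP: w => [//|w x] wx_m not_im.
  have w_m : size w == m by move: (wx_m); rewrite size_rcons eqSS.
  by case: (not_im (existT _ x (exist _ w w_m))) => //; apply: subset_eq_compat.
Qed.

Lemma sum_by_size (T : Type) (F : seq T -> C) :
  cm_sum (fun m => cm_sum (fun w : {w : seq T | size w == m} => F (sval w))) = cm_sum F.
Proof.
rewrite (sum_sigmaE (fun m (w : {w : seq T | size w == m}) => F (sval w))).
apply: (sum_reindex (Q := fun _ => True) (phi := fun w =>
  existT (fun m => {w : seq T | size w == m}) (size w)
    (exist (fun w' => size w' == size w) w (eqxx _)))) => //.
- by move=> w1 w2 _ _ /(congr1 (fun z => sval (projT2 z))).
- case=> m [w w_m] not_im; have size_w := eqP w_m; subst m.
  by case: (not_im w) => //; congr existT; apply: subset_eq_compat.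
Qed.

Lemma sum_ltnS m (F : nat -> C) :
  cm_sum (fun t : {t | t < m.+1} => F (sval t))
  = cm_add (F 0) (cm_sum (fun t : {t | t < m} => F (sval t).+1)).
Proof.
rewrite -[F 0](cm_sum_unit (fun _ => F 0)) -(sum_sumType
  (fun j : unit + {t | t < m} => if j is inr t then F (sval t).+1 else F 0)).
apply: (sum_reindex (Q := fun _ => True) (phi := fun j =>
  if j is inr t then exist (fun t => t < m.+1) (sval t).+1 (proj2_sig t)
  else exist (fun t => t < m.+1) 0 (ltn0Sn m))) => //.
- case=> [[]|[t lt_t]] [[]|[t' lt_t']] _ _ /(congr1 sval) //= [eq_t].
  by subst t'; congr inr; apply: subset_eq_compat.
- case=> -[|t] lt_t not_im.
    by case: (not_im (inl tt)) => //; apply: subset_eq_compat.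
  by case: (not_im (inr (exist _ t lt_t))) => //; apply: subset_eq_compat.
- by case.
Qed.

End CompleteSums.

Section SemiringPairSums.
Variables (S : csemiring) (V : cpair S).

Lemma cs_sum0 I : cs_sum I (fun _ => cs_zero S) = cs_zero S.
Proof.
have tt_bij : bijective (fun i : I => (tt, i)) by exists snd => // -[[] i].
have := cs_sum_mul (fun _ : unit => cs_zero S) (fun _ : I => cs_one S).
rewrite cs_sum_unit cs_mul0l -(cs_sum_bij _ tt_bij) /= => {2}->.
by congr (cs_sum _); apply: functional_extensionality => i; rewrite cs_mul0l.
Qed.

Lemma cp_sum0 I : cp_sum I (fun _ => cp_zero V) = cp_zero V.
Proof.
have := cp_sum_actl (cs_zero S) (fun _ : I => cp_zero V).
rewrite cp_act0l => {2}->.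
by congr (cp_sum _); apply: functional_extensionality => i; rewrite cp_act0l.
Qed.

Definition cs_ccmon : ccmon := @CCMon S (@cs_add S) (cs_zero S) (@cs_sum S) (@cs_addC S)
  (@cs_add0l S) (@cs_sum_empty S) (@cs_sum_unit S) (@cs_sum_bool S) (@cs_sum_bij S)
  (@cs_sum_sigma S) cs_sum0.
Definition cp_ccmon : ccmon := @CCMon V (@cp_add S V) (cp_zero V) (@cp_sum S V) (@cp_addC S V)
  (@cp_add0l S V) (@cp_sum_empty S V) (@cp_sum_unit S V) (@cp_sum_bool S V) (@cp_sum_bij S V)
  (@cp_sum_sigma S V) cp_sum0.

Lemma eq_sumS I (f g : I -> S) : (forall i, f i = g i) -> cs_sum I f = cs_sum I g.
Proof. exact: (@eq_sum cs_ccmon). Qed.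
Lemma eq_sumV I (f g : I -> V) : (forall i, f i = g i) -> cp_sum I f = cp_sum I g.
Proof. exact: (@eq_sum cp_ccmon). Qed.
Lemma sumS_eq0 I (f : I -> S) : (forall i, f i = cs_zero S) -> cs_sum I f = cs_zero S.
Proof. exact: (@sum_eq0 cs_ccmon). Qed.
Lemma sumV_eq0 I (f : I -> V) : (forall i, f i = cp_zero V) -> cp_sum I f = cp_zero V.
Proof. exact: (@sum_eq0 cp_ccmon). Qed.
Lemma sumS_pred1 I (f : I -> S) i0 :
  (forall i, i <> i0 -> f i = cs_zero S) -> cs_sum I f = f i0.
Proof. exact: (@sum_pred1 cs_ccmon). Qed.
Lemma sumV_pred1 I (f : I -> V) i0 :
  (forall i, i <> i0 -> f i = cp_zero V) -> cp_sum I f = f i0.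
Proof. exact: (@sum_pred1 cp_ccmon). Qed.
Lemma sumV_reindex I J (f : I -> V) (g : J -> V) (Q : J -> Prop) (phi : J -> I) :
  (forall j1 j2, Q j1 -> Q j2 -> phi j1 = phi j2 -> j1 = j2) ->
  (forall j, ~ Q j -> g j = cp_zero V) ->
  (forall i, (forall j, Q j -> phi j <> i) -> f i = cp_zero V) ->
  (forall j, Q j -> f (phi j) = g j) ->
  cp_sum I f = cp_sum J g.
Proof. exact: (@sum_reindex cp_ccmon). Qed.
Lemma sumV_sumType A B (f : A + B -> V) :
  cp_sum _ f = cp_add (cp_sum _ (fun a => f (inl a))) (cp_sum _ (fun b => f (inr b))).
Proof. exact: (@sum_sumType cp_ccmon). Qed.
Lemma sumV_sigmaE J (K : J -> Type) (F : forall j, K j -> V) :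
  cp_sum J (fun j => cp_sum (K j) (F j)) = cp_sum {j & K j} (fun z => F (projT1 z) (projT2 z)).
Proof. exact: (@sum_sigmaE cp_ccmon). Qed.
Lemma exchange_sumV I J (F : I -> J -> V) :
  cp_sum I (fun i => cp_sum J (F i)) = cp_sum J (fun j => cp_sum I (fun i => F i j)).
Proof. exact: (@exchange_sum cp_ccmon). Qed.
Lemma sumS_pair A B (F : A * B -> S) :
  cs_sum _ F = cs_sum A (fun a => cs_sum B (fun b => F (a, b))).
Proof. exact: (@sum_pair cs_ccmon). Qed.
Lemma sumS_size_rcons (T : Type) m (F : seq T -> S) :
  cs_sum {w : seq T | size w == m.+1} (fun w => F (sval w))
  = cs_sum T (fun x => cs_sum {w : seq T | size w == m} (fun w => F (rcons (sval w) x))).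
Proof. exact: (@sum_size_rcons cs_ccmon). Qed.
Lemma sumV_by_size (T : Type) (F : seq T -> V) :
  cp_sum nat (fun m => cp_sum {w : seq T | size w == m} (fun w => F (sval w))) = cp_sum _ F.
Proof. exact: (@sum_by_size cp_ccmon). Qed.
Lemma sumV_ltnS m (F : nat -> V) :
  cp_sum {t | t < m.+1} (fun t => F (sval t))
  = cp_add (F 0) (cp_sum {t | t < m} (fun t => F (sval t).+1)).
Proof. exact: (@sum_ltnS cp_ccmon). Qed.
Lemma fsumS_sum (T : finType) (F : T -> S) : fsumS F = cs_sum T F.
Proof. exact: (@foldr_sum_enum cs_ccmon). Qed.
Lemma fsumV_sum (T : finType) (F : T -> V) : fsumV V F = cp_sum T F.
Proof. exact: (@foldr_sum_enum cp_ccmon). Qed.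

Lemma sumV_group_nth (T : eqType) (p : T) (F : seq T -> nat -> T -> V) :
  cp_sum (seq T) (fun s => cp_sum {t | t < size s} (fun t => F s (sval t) (nth p s (sval t))))
  = cp_sum T (fun q => cp_sum {x : seq T * nat | (x.2 < size x.1) && (nth q x.1 x.2 == q)}
                         (fun x => F (sval x).1 (sval x).2 q)).
Proof.
rewrite !sumV_sigmaE.
have nth_at (z : {s : seq T & {t | t < size s}}) :
    let q := nth p (projT1 z) (sval (projT2 z)) in
    (sval (projT2 z) < size (projT1 z)) && (nth q (projT1 z) (sval (projT2 z)) == q).
  by case: z => s [t lt_t] /=; rewrite lt_t (set_nth_default p) ?eqxx.
symmetry; apply: (sumV_reindex (Q := fun _ => True) (phi := fun z =>
  existT _ _ (exist _ (projT1 z, sval (projT2 z)) (nth_at z)))) => //.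
- case=> s [t lt_t] [s' [t' lt_t']] _ _ /(congr1 (fun z => sval (projT2 z))) /= [eq_s eq_t].
  by subst s' t'; congr existT; apply: subset_eq_compat.
- case=> q [[s t] /= at_q] not_im; have /andP [lt_t /eqP nth_t] := at_q.
  case: (not_im (existT _ s (exist _ t lt_t))) => //=.
  have eq_q : nth p s t = q by rewrite (set_nth_default q) // nth_t.
  by subst q; congr existT; apply: subset_eq_compat.
Qed.

Lemma bmx_mulE n (A B : bmx S n) i j :
  bmx_mul A B i j = cs_sum 'I_n (fun k => cs_mul (A i k) (B k j)).
Proof. exact: fsumS_sum. Qed.

Lemma bmx_mul1l n (A : bmx S n) i j : bmx_mul (@bmx_one S n) A i j = A i j.
Proof.
rewrite bmx_mulE (sumS_pred1 (i0 := i)) /bmx_one ?eqxx ?cs_mul1l // => k /eqP.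
by rewrite eq_sym => /negbTE ->; rewrite cs_mul0l.
Qed.

Lemma bmx_mul0l n (A : bmx S n) i j : bmx_mul (@bmx_zero S n) A i j = cs_zero S.
Proof. by rewrite bmx_mulE; apply: sumS_eq0 => k; rewrite cs_mul0l. Qed.

Lemma cs_mul_suml I (a : I -> S) s :
  cs_mul (cs_sum I a) s = cs_sum I (fun i => cs_mul (a i) s).
Proof.
have := cs_sum_mul a (fun _ : unit => s); rewrite cs_sum_unit => ->.
have tt_bij : bijective (fun i : I => (i, tt)) by exists fst => // -[i []].
by rewrite -(cs_sum_bij (fun x : I * unit => cs_mul (a x.1) s) tt_bij).
Qed.

Lemma cp_iprod_prefix m (s : nat -> S) :
  cp_iprod s = cp_act (cs_lprod (mkseq s m)) (cp_iprod (fun t => s (m + t)) : V).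
Proof.
elim: m s => [|m IHm] s.
  by rewrite cp_act1; congr cp_iprod; apply: functional_extensionality => t; rewrite add0n.
rewrite cp_iprod_shift (IHm (fun t => s t.+1)) -cp_actA mkseqSl.
by congr (cp_act _ (cp_iprod _)); apply: functional_extensionality => t; rewrite addSn.
Qed.

Lemma cp_iprod_eq0 (s : nat -> S) t : s t = cs_zero S -> cp_iprod s = cp_zero V.
Proof.
by move=> st0; rewrite (cp_iprod_prefix t s) cp_iprod_shift addn0 st0 cp_act0l cp_act0r.
Qed.

End SemiringPairSums.

Section Streams.
Variable T : Type.

Definition scons (a : T) (f : nat -> T) (t : nat) : T :=
  if t is t'.+1 then f t' else a.

Definition sprepend (L : seq T) (f : nat -> T) (t : nat) : T :=
  nth (f (t - size L)) L t.

Lemma sprepend_lt (L : seq T) f t x0 : t < size L -> sprepend L f t = nth x0 L t.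
Proof. exact: set_nth_default. Qed.

Lemma sprepend_addn (L : seq T) f u : sprepend L f (size L + u) = f u.
Proof. by rewrite /sprepend nth_default ?leq_addr // addKn. Qed.

Lemma sprepend_inj (L L' : seq T) f f' : size L = size L' ->
  sprepend L f =1 sprepend L' f' -> L = L' /\ f =1 f'.
Proof.
move=> eq_size eq_pre; split=> [|u].
  apply: (eq_from_nth (x0 := f 0)) => // t lt_t.
  by rewrite -(sprepend_lt f) // eq_pre (sprepend_lt _ (f 0)) // -eq_size.
by rewrite -(sprepend_addn L) eq_pre eq_size sprepend_addn.
Qed.

Lemma scons_sprepend x (L : seq T) f t :
  scons x (sprepend L f) (size L + t) = scons (last x L) f t.
Proof.
case: t => [|t]; last by rewrite addnS /= sprepend_addn.
case/lastP: L => [//|L y]; rewrite addn0 size_rcons /= last_rcons.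
by rewrite (sprepend_lt _ y) ?size_rcons // nth_rcons ltnn eqxx.
Qed.

Lemma mkseq_sprepend x (L : seq T) f : mkseq (fun t => scons x (sprepend L f) t.+1) (size L) = L.
Proof.
apply: (eq_from_nth (x0 := x)) => [|t]; rewrite size_mkseq // => lt_t.
by rewrite nth_mkseq //= (sprepend_lt _ x).
Qed.

End Streams.

Section PushdownRuns.
Variables (S : csemiring) (V : cpair S) (Gamma : finType) (n : nat) (M : gmx S Gamma n).
Hypothesis HM : is_pushdown_transition_matrix M.
Variable l : nat.

Local Notation config := (seq Gamma * 'I_n)%type.

Definition step_weight (x y : config) : S := M x.1 y.1 x.2 y.2.

Definition liftc (s : seq Gamma) (x : config) : config := (x.1 ++ s, x.2).

Lemma liftc_inj s : injective (liftc s).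
Proof. by case=> a k [b k'] [/catIs -> ->]. Qed.

(** [lifted s x] iff [x = liftc s y] for some [y] with a nonempty stack. *)
Definition lifted (s : seq Gamma) (x : config) : bool :=
  (size s < size x.1) && (drop (size x.1 - size s) x.1 == s).

Definition unlift (s : seq Gamma) (x : config) : config := (take (size x.1 - size s) x.1, x.2).

Lemma lifted_liftc s x : x.1 != [::] -> lifted s (liftc s x).
Proof.
case: x => y k /= y_ne; rewrite /lifted /= size_cat addnK drop_size_cat // eqxx andbT.
by rewrite -{1}[size s]add0n ltn_add2r lt0n size_eq0.
Qed.

Lemma unliftK s x : lifted s x -> liftc s (unlift s x) = x.
Proof. by case: x => a k /andP [_ /eqP drop_a]; rewrite /liftc /= -{2}drop_a cat_take_drop. Qed.

Lemma unlift_neq0 s x : lifted s x -> (unlift s x).1 != [::].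
Proof.
case/andP=> lt_s _; rewrite -size_eq0 size_take.
by case: ifP; rewrite -lt0n ?subn_gt0 // => _; apply: leq_trans lt_s.
Qed.

Lemma step_weight_nil x y : x.1 = [::] -> step_weight x y = cs_zero S.
Proof.
case: HM => _ [_ M0] x_nil; rewrite /step_weight x_nil M0 // => -[p [pi [pi' [] //]]].
Qed.

Lemma step_weight_lift s x y : x.1 != [::] ->
  step_weight (liftc s x) (liftc s y) = step_weight x y.
Proof.
case: HM => _ [M_push M0]; case: x => -[//|q a] k _; rewrite /step_weight /=.
case: (classic (exists rho, y.1 = rho ++ a)) => [[rho ->]|no_rho].
  by rewrite -catA !M_push.
rewrite !M0 // => -[p [rho [pi' [[_ <-] y_rho]]]]; apply: no_rho; exists rho => //.
by apply: (@catIs _ _ _ s); rewrite -catA.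
Qed.

Lemma step_weight_exit s y z : y.1 != [::] -> ~~ lifted s z -> z.1 != s ->
  step_weight (liftc s y) z = cs_zero S.
Proof.
case: HM => _ [_ M0]; case: y => -[//|q a] k _ z_unlifted z_neq_s.
rewrite /step_weight /= M0 // => -[p [rho [pi' [[_ <-] z_eq]]]].
case: z z_eq z_unlifted z_neq_s => b k' /= -> z_unlifted z_neq_s.
case E: (rho ++ a) => [|r ra]; first by rewrite catA E eqxx in z_neq_s.
by move: z_unlifted; rewrite catA E (@lifted_liftc s (r :: ra, k')).
Qed.

Definition accepting (c : nat -> config) : Prop := P_l l (fun t => (c t).2).

(** A run from [x] is the stream of the configurations following [x]. *)
Definition run : Type := {c : nat -> config | accepting c}.

Lemma accepting_shift m c c' : (forall u, c' (m + u) = c u) -> accepting c -> accepting c'.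
Proof.
move=> shift_c acc_c N; have [t [le_Nt lt_l]] := acc_c N.
by exists (m + t); rewrite shift_c; split=> //; apply: leq_trans (leq_addl m t).
Qed.

Lemma accepting_drop m c : accepting c -> accepting (fun u => c (m + u)).
Proof.
move=> acc_c N; have [t [le_t lt_l]] := acc_c (N + m).
have le_mt : m <= t by apply: leq_trans le_t; apply: leq_addl.
by exists (t - m); rewrite subnKC //; split=> //; lia.
Qed.

Definition run_weight (x : config) (c : nat -> config) : V :=
  cp_iprod (fun t => step_weight (scons x c t) (scons x c t.+1)).

Definition omega (x : config) : V := cp_sum run (fun c => run_weight x (sval c)).

Lemma M_omegaE pi i : M_omega V M l pi i = omega (pi, i).
Proof.
rewrite /M_omega sumV_sigmaE.
pose f (z : {pis : nat -> seq Gamma & {js : nat -> 'I_n | P_l l js}}) : run :=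
  exist accepting (fun t => (projT1 z t, sval (projT2 z) t)) (proj2_sig (projT2 z)).
have f_bij : bijective f.
  exists (fun c : run => existT _ (fun t => (sval c t).1)
                           (exist (P_l l) (fun t => (sval c t).2) (proj2_sig c))).
    by case=> pis [js acc].
  case=> c acc; rewrite /f /=; apply: subset_eq_compat.
  by apply: functional_extensionality => t; case: (c t).
rewrite /omega -(cp_sum_bij _ f_bij); apply: eq_sumV => -[pis [js acc]].
by congr cp_iprod; apply: functional_extensionality => -[].
Qed.

Lemma run_weight_eq0 x c t : step_weight (scons x c t) (c t) = cs_zero S ->
  run_weight x c = cp_zero V.
Proof. exact: cp_iprod_eq0. Qed.

Lemma run_weight_scons x y c : run_weight x (scons y c) = cp_act (step_weight x y) (run_weight y c).
Proof. by rewrite /run_weight cp_iprod_shift. Qed.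

Lemma omega_nil k : omega ([::], k) = cp_zero V.
Proof. by apply: sumV_eq0 => c; apply: (@run_weight_eq0 _ _ 0); apply: step_weight_nil. Qed.

Lemma omega_unfold x : omega x =
  cp_sum (seq Gamma) (fun b => cp_sum 'I_n (fun k => cp_act (step_weight x (b, k)) (omega (b, k)))).
Proof.
under [RHS]eq_sumV => b do under eq_sumV => k do rewrite /omega cp_sum_actl.
rewrite !sumV_sigmaE {1}/omega.
pose f (z : {y : {b : seq Gamma & 'I_n} & run}) : run :=
  exist accepting (scons (projT1 (projT1 z), projT2 (projT1 z)) (sval (projT2 z)))
    (accepting_shift (m := 1) (fun u => erefl) (proj2_sig (projT2 z))).
have f_bij : bijective f.
  exists (fun c : run => existT _ (existT _ (sval c 0).1 (sval c 0).2)
            (exist accepting (fun t => sval c t.+1) (accepting_drop 1 (proj2_sig c)))).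
    by case=> -[b k] [c acc]; congr existT; apply: subset_eq_compat.
  case=> c acc; rewrite /f /=; apply: subset_eq_compat.
  by apply: functional_extensionality => -[|t] //=; case: (c 0).
rewrite -(cp_sum_bij _ f_bij); apply: eq_sumV => -[[b k] c].
exact: run_weight_scons.
Qed.

Fixpoint path_weight (x : config) (w : seq config) : S :=
  if w is y :: w' then cs_mul (step_weight x y) (path_weight y w') else cs_one S.

Lemma path_weight_rcons x w y :
  path_weight x (rcons w y) = cs_mul (path_weight x w) (step_weight (last x w) y).
Proof.
elim: w x => [|z w IHw] x /=; first by rewrite cs_mul1r cs_mul1l.
by rewrite IHw cs_mulA.
Qed.

Lemma lprod_path_weight (f : nat -> config) m :
  cs_lprod (mkseq (fun t => step_weight (f t) (f t.+1)) m)
  = path_weight (f 0) (mkseq (fun t => f t.+1) m).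
Proof. by elim: m f => [|m IHm] f //; rewrite !mkseqSl /= IHm. Qed.

Lemma path_weight_lift s x w : all (fun y => y.1 != [::]) (belast x w) ->
  path_weight (liftc s x) (map (liftc s) w) = path_weight x w.
Proof. by elim: w x => [|y w IHw] x //= /andP [x_ne w_ne]; rewrite step_weight_lift // IHw. Qed.

Lemma path_weight_eq0 x w : ~~ all (fun y => y.1 != [::]) (belast x w) ->
  path_weight x w = cs_zero S.
Proof.
elim: w x => [|y w IHw] x //=; rewrite negb_and negbK => /orP [/eqP x_nil|w_nil].
  by rewrite step_weight_nil // cs_mul0l.
by rewrite IHw // cs_mul0r.
Qed.

Lemma run_weight_sprepend x L c :
  run_weight x (sprepend L c) = cp_act (path_weight x L) (run_weight (last x L) c).
Proof.
rewrite /run_weight (cp_iprod_prefix V (size L)) lprod_path_weight (mkseq_sprepend x L c).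
congr (cp_act _ (cp_iprod _)); apply: functional_extensionality => t.
by rewrite -addnS !scons_sprepend.
Qed.

Lemma gmx_powS m a b i j :
  gmx_pow M m.+1 a b i j = cs_sum (seq Gamma) (fun pi => bmx_mul (gmx_pow M m a pi) (M pi b) i j).
Proof. by []. Qed.

Lemma gmx_pow1 a b i j : gmx_pow M 1 a b i j = M a b i j.
Proof.
rewrite gmx_powS (sumS_pred1 (i0 := a)) /= ?eqxx ?bmx_mul1l // => pi /eqP.
by rewrite eq_sym => /negbTE ->; rewrite bmx_mul0l.
Qed.

Lemma gmx_pow_path m a b i j : gmx_pow M m.+1 a b i j =
  cs_sum {w : seq config | size w == m} (fun w => path_weight (a, i) (rcons (sval w) (b, j))).
Proof.
elim: m b j => [|m IHm] b j.
  rewrite gmx_pow1 (sumS_pred1 (i0 := exist _ [::] (eqxx 0))) /= ?cs_mul1r //.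
  by case=> -[|y w] // w0 not_nil; case: not_nil; apply: subset_eq_compat.
rewrite gmx_powS (sumS_size_rcons _ (fun w => path_weight (a, i) (rcons w (b, j)))) sumS_pair.
apply: eq_sumS => pi.
rewrite bmx_mulE; apply: eq_sumS => k.
rewrite IHm cs_mul_suml; apply: eq_sumS => w.
by rewrite [RHS]path_weight_rcons last_rcons.
Qed.

(** [existT k1 (existT w c)]: a path from [x] through [w] down to the empty
    stack in state [k1], then a run [c] from [(s, k1)].  Lifted by [s] (see
    [lift_descent]) it is a run from [liftc s x] that first reaches the stack
    [s] at time [size w]. *)
Definition descent : Type := {k1 : 'I_n & {w : seq config & run}}.

Definition descent_weight (x : config) (s : seq Gamma) (d : descent) : V :=
  let: existT k1 (existT w c) := d in
  cp_act (path_weight x (rcons w ([::], k1))) (run_weight (s, k1) (sval c)).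

Lemma gmx_star_omega x s : x.1 != [::] ->
  cp_sum 'I_n (fun k1 => cp_act (gmx_star M x.1 [::] x.2 k1) (omega (s, k1)))
  = cp_sum descent (descent_weight x s).
Proof.
case: x => a k0 /= a_ne; rewrite [RHS]cp_sum_sigma; apply: eq_sumV => k1.
rewrite /gmx_star cp_sum_actr.
transitivity (cp_sum nat (fun m => cp_act (gmx_pow M m.+1 a [::] k0 k1) (omega (s, k1)))).
  apply: (sumV_reindex (Q := fun _ => True) (phi := succn)) => //.
  - by move=> m1 m2 _ _ [].
  - case=> [|m] not_succ; last by case: (not_succ m).
    by rewrite /= (negbTE a_ne) cp_act0l.
rewrite cp_sum_sigma -sumV_by_size; apply: eq_sumV => m.
rewrite gmx_pow_path cp_sum_actr; apply: eq_sumV => w.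
by rewrite /omega cp_sum_actl.
Qed.

Definition descent_path (s : seq Gamma) (w : seq config) (k1 : 'I_n) : seq config :=
  map (liftc s) (rcons w ([::], k1)).

Lemma size_descent_path s w k1 : size (descent_path s w k1) = (size w).+1.
Proof. by rewrite size_map size_rcons. Qed.

Lemma nth_descent_path s w k1 x0 t : t < size w ->
  nth x0 (descent_path s w k1) t = liftc s (nth ([::], k1) w t).
Proof. by move=> lt_t; rewrite (nth_map ([::], k1)) ?nth_rcons ?lt_t // size_rcons ltnW. Qed.

Lemma nth_descent_path_size s w k1 x0 : nth x0 (descent_path s w k1) (size w) = (s, k1).
Proof. by rewrite (nth_map ([::], k1)) ?nth_rcons ?ltnn ?eqxx // size_rcons. Qed.

Definition lift_descent (s : seq Gamma) (d : descent) : run :=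
  let: existT k1 (existT w c) := d in
  exist accepting (sprepend (descent_path s w k1) (sval c))
    (accepting_shift (sprepend_addn _ (sval c)) (proj2_sig c)).

Definition lift_run (s : seq Gamma) (c : run) : run :=
  exist accepting (fun t => liftc s (sval c t)) (proj2_sig c).

Definition descent_above (d : descent) : Prop :=
  let: existT _ (existT w _) := d in all (fun y : config => y.1 != [::]) w.

Definition run_above (c : run) : Prop := forall t, (sval c t).1 != [::].

Lemma lift_descent_at_size s d :
  sval (lift_descent s d) (size (projT1 (projT2 d))) = (s, projT1 d).
Proof.
case: d => k1 [w c] /=.
by rewrite (sprepend_lt _ (s, k1)) ?size_descent_path // nth_descent_path_size.
Qed.

Lemma lift_descent_below_size s d t : descent_above d -> t < size (projT1 (projT2 d)) ->
  (sval (lift_descent s d) t).1 != s.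
Proof.
case: d => k1 [w c] /= /allP w_above lt_t.
rewrite (sprepend_lt _ (s, k1)) ?size_descent_path ?ltnS 1?ltnW // nth_descent_path //.
by apply: cat_neq; apply: w_above; apply: mem_nth.
Qed.

Lemma lift_descent_inj s d d' : descent_above d -> descent_above d' ->
  lift_descent s d = lift_descent s d' -> d = d'.
Proof.
move=> above_d above_d' eq_lift.
have eq_size : size (projT1 (projT2 d)) = size (projT1 (projT2 d')).
  case: (ltngtP (size (projT1 (projT2 d))) (size (projT1 (projT2 d')))) => // lt_size.
    have := lift_descent_below_size s above_d' lt_size.
    by rewrite -eq_lift lift_descent_at_size eqxx.
  have := lift_descent_below_size s above_d lt_size.
  by rewrite eq_lift lift_descent_at_size eqxx.
case: d d' {above_d above_d'} eq_lift eq_size => k1 [w c] [k1' [w' c']] /=.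
move=> /(congr1 sval) /= eq_pre eq_size.
have eq_path_size : size (descent_path s w k1) = size (descent_path s w' k1').
  by rewrite !size_descent_path eq_size.
have [/inj_map eq_path eq_c] := sprepend_inj eq_path_size (fun t => congr1 (fun f => f t) eq_pre).
case/rcons_inj: (eq_path (@liftc_inj s)) => <- <-.
do 2 congr existT; case: c c' {eq_pre} eq_c => [c acc] [c' acc'] /= eq_c.
by apply: subset_eq_compat; apply: functional_extensionality.
Qed.

Lemma lift_run_inj s : injective (lift_run s).
Proof.
case=> c acc [c' acc'] /(congr1 sval) /= eq_lift; apply: subset_eq_compat.
apply: functional_extensionality => t.
by apply: (@liftc_inj s); apply: (congr1 (fun f => f t) eq_lift).
Qed.

Lemma lift_descent_neq_lift_run s d c : descent_above d -> run_above c ->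
  lift_descent s d <> lift_run s c.
Proof.
move=> above_d above_c /(congr1 (fun c => (sval c (size (projT1 (projT2 d)))).1)).
by rewrite lift_descent_at_size /= => /esym /eqP; apply/negP/cat_neq.
Qed.

Lemma descent_weight_lift x s d : x.1 != [::] -> descent_above d ->
  run_weight (liftc s x) (sval (lift_descent s d)) = descent_weight x s d.
Proof.
case: d => k1 [w c] x_ne w_above /=.
rewrite run_weight_sprepend /descent_path last_map last_rcons path_weight_lift //.
by rewrite belast_rcons /= x_ne.
Qed.

Lemma run_weight_lift x s c : x.1 != [::] -> (forall t, (c t).1 != [::]) ->
  run_weight (liftc s x) (fun t => liftc s (c t)) = run_weight x c.
Proof.
move=> x_ne c_above; congr cp_iprod; apply: functional_extensionality => t.
have scons_lift u : scons (liftc s x) (fun t => liftc s (c t)) u = liftc s (scons x c u) by case: u.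
by rewrite !scons_lift step_weight_lift //; case: t.
Qed.

Lemma descent_weight_eq0 x s d : ~ descent_above d -> descent_weight x s d = cp_zero V.
Proof.
case: d => k1 [w c] /= w_not_above.
by rewrite path_weight_eq0 ?cp_act0l // belast_rcons /= negb_and; apply/orP; right; apply/negP.
Qed.

Lemma run_weight_not_above x c : ~ (forall t, (c t).1 != [::]) -> run_weight x c = cp_zero V.
Proof.
move=> /not_all_ex_not [t /negP]; rewrite negbK => /eqP c_nil.
by apply: (@run_weight_eq0 _ _ t.+1); apply: step_weight_nil.
Qed.

Lemma scons_lifted x s c t0 : x.1 != [::] -> (forall t, t < t0 -> lifted s (c t)) ->
  exists2 y : config, y.1 != [::] & scons (liftc s x) c t0 = liftc s y.
Proof.
case: t0 => [|t0] x_ne c_lifted; first by exists x.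
by exists (unlift s (c t0)); rewrite ?unlift_neq0 ?unliftK ?c_lifted.
Qed.

Lemma lift_descent_first_exit s c acc t0 :
  (forall t, t < t0 -> lifted s (c t)) -> (c t0).1 = s ->
  exists2 d, descent_above d & lift_descent s d = exist accepting c acc.
Proof.
move=> c_lifted c_exit.
exists (existT _ (c t0).2 (existT _ (mkseq (fun t => unlift s (c t)) t0)
          (exist accepting (fun u => c (t0.+1 + u)) (accepting_drop t0.+1 acc)))).
  by apply/allP => y /mapP [t]; rewrite mem_iota add0n => /andP [_ /c_lifted /unlift_neq0] ? ->.
apply: subset_eq_compat; apply: functional_extensionality => t.
have size_path : size (descent_path s (mkseq (fun t => unlift s (c t)) t0) (c t0).2) = t0.+1.
  by rewrite size_descent_path size_mkseq.
case: (ltngtP t t0) => [lt_t|gt_t|->].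
- rewrite (sprepend_lt _ (c t)) ?size_path 1?ltnW // nth_descent_path ?size_mkseq //.
  by rewrite nth_mkseq // unliftK // c_lifted.
- by rewrite -(subnKC gt_t) -size_path sprepend_addn size_path.
- rewrite (sprepend_lt _ (c t0)) ?size_path //.
  have := nth_descent_path_size s (mkseq (fun t => unlift s (c t)) t0) (c t0).2 (c t0).
  by rewrite size_mkseq => ->; rewrite -c_exit; case: (c t0).
Qed.

Lemma lift_run_all_lifted s c acc : (forall t, lifted s (c t)) ->
  exists2 c', run_above c' & lift_run s c' = exist accepting c acc.
Proof.
move=> c_lifted; exists (exist accepting (fun t => unlift s (c t)) acc).
  by move=> t; apply: unlift_neq0.
by apply: subset_eq_compat; apply: functional_extensionality => t; apply: unliftK.
Qed.

(** Look at the first time the run leaves the lifted configurations: if it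
    lands on the stack [s], the run is a lifted descent; otherwise the step
    has weight zero by [step_weight_exit]. *)
Lemma run_weight_not_lifted x s (c : run) : x.1 != [::] ->
  (forall d, descent_above d -> lift_descent s d <> c) ->
  (forall c', run_above c' -> lift_run s c' <> c) ->
  run_weight (liftc s x) (sval c) = cp_zero V.
Proof.
case: c => c acc /= x_ne not_descent not_lifted.
have [/(lift_run_all_lifted acc) [c' c'_above]|] := classic (forall t, lifted s (c t)).
  by move/(not_lifted c' c'_above).
move=> /not_all_ex_not [t1 /negP c_t1].
case: (ex_minnP (ex_intro (fun t => ~~ lifted s (c t)) t1 c_t1)) => t0 c_t0 t0_min.
have c_lifted t : t < t0 -> lifted s (c t).
  by move=> lt_t; apply: contraT => /t0_min; rewrite leqNgt lt_t.
have [y y_ne prev] := scons_lifted x_ne c_lifted.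
case: (eqVneq (c t0).1 s) => [c_exit|c_not_exit].
  by have [d d_above] := lift_descent_first_exit acc c_lifted c_exit; move/(not_descent d d_above).
by apply: (@run_weight_eq0 _ _ t0); rewrite prev step_weight_exit.
Qed.

Lemma omega_liftc x s : x.1 != [::] ->
  omega (liftc s x) = cp_add (cp_sum descent (descent_weight x s)) (omega x).
Proof.
move=> x_ne; rewrite /omega -[RHS](sumV_sumType (fun j : descent + run =>
  match j with inl d => descent_weight x s d | inr c => run_weight x (sval c) end)).
apply: (sumV_reindex
  (Q := fun j => match j with inl d => descent_above d | inr c => run_above c end)
  (phi := fun j => match j with inl d => lift_descent s d | inr c => lift_run s c end)).
- case=> [d|c] [d'|c'] above above' /=.
  + by move/(lift_descent_inj above above') ->.
  + by move/(lift_descent_neq_lift_run above above').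
  + by move/esym/(lift_descent_neq_lift_run above' above).
  + by move/lift_run_inj ->.
- case=> [d|c] /= not_above; first exact: descent_weight_eq0.
  exact: run_weight_not_above.
- move=> c not_image; apply: run_weight_not_lifted => // [d|c'] above.
    exact: (not_image (inl d)).
  exact: (not_image (inr c')).
- by case=> [d|c] above /=; [apply: descent_weight_lift | apply: run_weight_lift].
Qed.

Lemma omega_cons q s k0 : omega (q :: s, k0) =
  cp_add (cp_sum 'I_n (fun k1 => cp_act (gmx_star M [:: q] [::] k0 k1) (omega (s, k1))))
         (omega ([:: q], k0)).
Proof. by rewrite (@gmx_star_omega ([:: q], k0)) // -omega_liftc. Qed.

Definition star_prod (s : seq Gamma) : bmx S n :=
  bmx_lprod (map (fun q => gmx_star M [:: q] [::]) s).

Lemma omega_stack p0 s k0 : omega (s, k0) =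
  cp_sum {t | t < size s} (fun t => cp_sum 'I_n (fun k =>
    cp_act (star_prod (take (sval t) s) k0 k) (omega ([:: nth p0 s (sval t)], k)))).
Proof.
elim: s k0 => [|q s IHs] k0; first by rewrite omega_nil cp_sum_empty // => -[].
rewrite omega_cons (sumV_ltnS _ (fun t => cp_sum 'I_n (fun k =>
  cp_act (star_prod (take t (q :: s)) k0 k) (omega ([:: nth p0 (q :: s) t], k))))) cp_addC.
congr cp_add.
  rewrite (sumV_pred1 (i0 := k0)) /star_prod /= /bmx_one ?eqxx ?cp_act1 // => k /eqP.
  by rewrite eq_sym => /negbTE ->; rewrite cp_act0l.
under eq_sumV => k1 do rewrite IHs cp_sum_actl.
rewrite exchange_sumV; apply: eq_sumV => t.
under eq_sumV => k1 do rewrite cp_sum_actl.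
rewrite exchange_sumV; apply: eq_sumV => k.
by rewrite /star_prod /= bmx_mulE cp_sum_actr; apply: eq_sumV => k1; rewrite cp_actA.
Qed.

Lemma omega_system p i : omega ([:: p], i) =
  cp_sum Gamma (fun p' => cp_sum 'I_n (fun k => cp_act (A_M M p p' i k) (omega ([:: p'], k)))).
Proof.
pose F pi t p' := cp_sum 'I_n (fun k => cp_sum 'I_n (fun k0 =>
  cp_act (M [:: p] pi i k0) (cp_act (star_prod (take t pi) k0 k) (omega ([:: p'], k))))).
transitivity (cp_sum (seq Gamma) (fun pi =>
  cp_sum {t | t < size pi} (fun t => F pi (sval t) (nth p pi (sval t))))).
  rewrite omega_unfold; apply: eq_sumV => pi.
  under eq_sumV => k0 do rewrite (omega_stack p) cp_sum_actl.
  rewrite exchange_sumV; apply: eq_sumV => t.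
  under eq_sumV => k0 do rewrite cp_sum_actl.
  by rewrite exchange_sumV.
rewrite sumV_group_nth; apply: eq_sumV => p'.
under [RHS]eq_sumV => k do rewrite /A_M cp_sum_actr.
rewrite exchange_sumV; apply: eq_sumV => x; apply: eq_sumV => k.
by rewrite bmx_mulE cp_sum_actr; apply: eq_sumV => k0; rewrite cp_actA.
Qed.

End PushdownRuns.

Theorem theorem8 (S : csemiring) (V : cpair S) (S' : S -> Prop)
  (HS'0 : S' (cs_zero S)) (HS'1 : S' (cs_one S))
  (n : nat) (Hn : 0 < n) (Gamma : finType) (M : gmx S Gamma n)
  (HM' : forall pi1 pi2 i j, S' (M pi1 pi2 i j))
  (HM : is_pushdown_transition_matrix M) :
  forall l : nat, l <= n ->
  forall (p : Gamma) (i : 'I_n),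
    M_omega V M l [:: p] i
    = fsumV V (fun p' : Gamma =>
        fsumV V (fun k : 'I_n => cp_act (A_M M p p' i k) (M_omega V M l [:: p'] k))).
Proof.
move=> l _ p i.
rewrite M_omegaE (omega_system V HM) fsumV_sum; apply: eq_sumV => p'.
by rewrite fsumV_sum; apply: eq_sumV => k; rewrite M_omegaE.
Qed.
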